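(* A space $X$ is locally realcompact if and only if $X\subseteq\beta X\setminus\mathrm{cl}_{\beta X}(\upsilon X\setminus X)$.
   Context: All spaces are completely regular Hausdorff. $\beta X$ is the Stone–Čech compactification and $\upsilon X\subseteq\beta X$ the Hewitt realcompactification of $X$. $X$ is locally realcompact if every point of $X$ has an open neighborhood in $X$ whose closure in $X$ is realcompact (homeomorphic to a closed subspace of a power of $\mathbb{R}$). *)

From Stdlib Require Import Reals List Classical.
Open Scope R_scope.

Record TopSpace := { carrier :> Type; opens : (carrier -> Prop) -> Prop }.

Definition is_topology (X : TopSpace) : Prop :=
  opens X (fun _ => True) /\
  (forall U V, opens X U -> opens X V -> opens X (fun x => U x /\ V x)) /\
  (forall F : (X -> Prop) -> Prop, (forall U, F U -> opens X U) ->
     opens X (fun x => exists U, F U /\ U x)).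

Definition closed_set (X : TopSpace) (S : X -> Prop) : Prop :=
  opens X (fun x => ~ S x).

Definition closure (X : TopSpace) (S : X -> Prop) (x : X) : Prop :=
  forall U, opens X U -> U x -> exists y, U y /\ S y.

Definition continuous (X Y : TopSpace) (f : X -> Y) : Prop :=
  forall V, opens Y V -> opens X (fun x => V (f x)).

Definition subspace (X : TopSpace) (P : X -> Prop) : TopSpace :=
  {| carrier := { x : X | P x };
     opens := fun W => exists U, opens X U /\ forall z, W z <-> U (proj1_sig z) |}.

Definition Rtop : TopSpace :=
  {| carrier := R;
     opens := fun U => forall x, U x -> exists eps, 0 < eps /\
                 forall y, Rabs (y - x) < eps -> U y |}.

Definition Rpow (I : Type) : TopSpace :=
  {| carrier := I -> R;
     opens := fun U => forall x, U x -> exists (l : list I) (eps : R), 0 < eps /\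
                 forall y, (forall i, In i l -> Rabs (y i - x i) < eps) -> U y |}.

Definition embedding (X Y : TopSpace) (h : X -> Y) : Prop :=
  (forall a b, h a = h b -> a = b) /\ continuous X Y h /\
  (forall U, opens X U -> exists V, opens Y V /\ forall x, U x <-> V (h x)).

Definition hausdorff (X : TopSpace) : Prop :=
  forall x y : X, x <> y -> exists U V, opens X U /\ opens X V /\ U x /\ V y /\
    forall z, ~ (U z /\ V z).

Definition completely_regular (X : TopSpace) : Prop :=
  forall (F : X -> Prop) (x : X), closed_set X F -> ~ F x ->
    exists f : X -> R, continuous X Rtop f /\ f x = 0 /\ forall y, F y -> f y = 1.

Definition tychonoff (X : TopSpace) : Prop :=
  is_topology X /\ hausdorff X /\ completely_regular X.

Definition compact (X : TopSpace) : Prop :=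
  forall F : (X -> Prop) -> Prop, (forall U, F U -> opens X U) ->
    (forall x, exists U, F U /\ U x) ->
    exists l : list (X -> Prop), (forall U, In U l -> F U) /\
      forall x, exists U, In U l /\ U x.

Definition realcompact (Y : TopSpace) : Prop :=
  exists (I : Type) (h : Y -> (I -> R)),
    embedding Y (Rpow I) h /\ closed_set (Rpow I) (fun z => exists y, h y = z).

Definition locally_realcompact (X : TopSpace) : Prop :=
  forall x : X, exists U, opens X U /\ U x /\ realcompact (subspace X (closure X U)).

(* This determines beta X up to homeomorphism over X. *)
Definition stone_cech (X K : TopSpace) (e : X -> K) : Prop :=
  is_topology K /\ compact K /\ hausdorff K /\ embedding X K e /\
  (forall k, closure K (fun k' => exists x, e x = k') k) /\
  (forall f : X -> R, continuous X Rtop f -> (exists M, forall x, Rabs (f x) <= M) ->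
     exists g : K -> R, continuous K Rtop g /\ forall x, g (e x) = f x).

(* Hewitt realcompactification inside beta X: p is in upsilon X iff every
   continuous real function on X extends continuously (real-valued) to X u {p}. *)
Definition in_upsilon (X K : TopSpace) (e : X -> K) (p : K) : Prop :=
  forall f : X -> R, continuous X Rtop f ->
    exists g : K -> R, (forall x, g (e x) = f x) /\
      continuous (subspace K (fun k => (exists x, e x = k) \/ k = p)) Rtop
                 (fun z => g (proj1_sig z)).

From Pilot Require Import Defs.
From Stdlib Require Import Reals List Classical.
From Stdlib Require Import ClassicalEpsilon FunctionalExtensionality PropExtensionality Lra.
(* Reals exports its own [closed_set] and [compact]; these must be the ones of Defs. *)
Import Defs.
Open Scope R_scope.

(* If x has an open neighbourhood U with cl U realcompact, embed cl U as a closed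
   subset of R^I by h.  For a cutoff psi supported in U with psi >= 1/2 near x, the
   functions psi * h_i are continuous on X, so at a point p of upsilon X \ X close to
   e x they have limits; dividing by the limit of psi gives a point z of R^I that the
   h(y) approach as e y -> p.  Closedness of the image puts z = h(a), and then
   Hausdorffness of beta X forces p = e a, contradicting p not in X.
   Conversely, if e x has a neighbourhood V missing upsilon X \ X, take W with
   cl W inside V and A = cl_X (e^-1 W).  Evaluation embeds A in R^C(X); if w lies in
   the closure of the image, compactness of beta X gives a point p adherent to all
   the sets e({a in A | f a is near w f, f in a finite list}).  Every continuous f
   then tends to w f at p, so p lies in upsilon X and in cl W, hence in X, and w is
   the evaluation at that point. *)

Lemma opens_ext (X : TopSpace) (U V : X -> Prop) :
  opens X U -> (forall x, U x <-> V x) -> opens X V.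
Proof.
  intros HU H. replace V with U; [exact HU|].
  apply functional_extensionality; intro x; apply propositional_extensionality; auto.
Qed.

Lemma closed_compl_open (X : TopSpace) (U : X -> Prop) :
  opens X U -> closed_set X (fun x => ~ U x).
Proof.
  intros HU. apply (opens_ext X U); [exact HU|].
  intro x; split; [auto | apply NNPP].
Qed.

Section OpenSets.

Variable X : TopSpace.
Hypothesis HX : is_topology X.

Lemma open_of_nbhds (U : X -> Prop) :
  (forall x, U x -> exists W, opens X W /\ W x /\ forall y, W y -> U y) -> opens X U.
Proof.
  intros H. destruct HX as [_ [_ Hunion]].
  apply opens_ext with (U := fun x => exists W, (opens X W /\ forall y, W y -> U y) /\ W x).
  - apply Hunion. intros W [HW _]; exact HW.
  - intro x; split.
    + intros [W [[_ HWU] Wx]]; auto.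
    + intro Ux. destruct (H x Ux) as [W [HW [Wx HWU]]]. exists W; auto.
Qed.

Lemma opens_and (U V : X -> Prop) :
  opens X U -> opens X V -> opens X (fun x => U x /\ V x).
Proof. destruct HX as [_ [H _]]; auto. Qed.

Lemma nbhd_finite_inter {J : Type} (P : J -> (X -> Prop) -> Prop) (x : X) (l : list J) :
  (forall j W W', P j W -> (forall y, W' y -> W y) -> P j W') ->
  (forall j, In j l -> exists W, opens X W /\ W x /\ P j W) ->
  exists W, opens X W /\ W x /\ forall j, In j l -> P j W.
Proof.
  intros Pmono. induction l as [|j l IH]; intros H.
  - exists (fun _ => True). split; [apply HX|]. split; [exact I | intros j []].
  - destruct IH as [W1 [HW1 [W1x HP1]]]; [intros j' Hj'; apply H; right; exact Hj'|].
    destruct (H j (or_introl eq_refl)) as [W2 [HW2 [W2x HP2]]].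
    exists (fun y => W1 y /\ W2 y). split; [apply opens_and; auto|]. split; [auto|].
    intros j' [<-|Hj'].
    + apply Pmono with W2; [exact HP2 | intros y [_ ?]; auto].
    + apply Pmono with W1; [apply HP1, Hj' | intros y [? _]; auto].
Qed.

End OpenSets.

Lemma Rtop_open_ball (c r : R) : opens Rtop (fun y => Rabs (y - c) < r).
Proof.
  simpl. intros x Hx. exists (r - Rabs (x - c)). split; [lra|].
  intros y Hy. pose proof (Rabs_triang (y - x) (x - c)) as Htri.
  replace (y - x + (x - c)) with (y - c) in Htri by ring. lra.
Qed.

Lemma Rtop_open_lt (c : R) : opens Rtop (fun r => r < c).
Proof.
  simpl. intros x Hx. exists (c - x). split; [lra|].
  intros y Hy. apply Rabs_def2 in Hy. lra.
Qed.

Lemma Rtop_open_gt (c : R) : opens Rtop (fun r => c < r).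
Proof.
  simpl. intros x Hx. exists (x - c). split; [lra|].
  intros y Hy. apply Rabs_def2 in Hy. lra.
Qed.

Lemma open_lt_preimage (X : TopSpace) (f : X -> R) (c : R) :
  continuous X Rtop f -> opens X (fun x => f x < c).
Proof. intros Hf. apply (Hf (fun r => r < c)), Rtop_open_lt. Qed.

Lemma open_gt_preimage (X : TopSpace) (f : X -> R) (c : R) :
  continuous X Rtop f -> opens X (fun x => c < f x).
Proof. intros Hf. apply (Hf (fun r => c < r)), Rtop_open_gt. Qed.

Lemma continuous_nbhd (X : TopSpace) (f : X -> R) :
  continuous X Rtop f ->
  forall x eps, 0 < eps ->
    exists N, opens X N /\ N x /\ forall y, N y -> Rabs (f y - f x) < eps.
Proof.
  intros Hf x eps Heps. exists (fun y => Rabs (f y - f x) < eps). split.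
  - apply (Hf (fun r => Rabs (r - f x) < eps)), Rtop_open_ball.
  - split; [|auto]. unfold Rminus; rewrite Rplus_opp_r, Rabs_R0; exact Heps.
Qed.

Lemma continuous_of_nbhd (X : TopSpace) (HX : is_topology X) (f : X -> R) :
  (forall x eps, 0 < eps ->
     exists N, opens X N /\ N x /\ forall y, N y -> Rabs (f y - f x) < eps) ->
  continuous X Rtop f.
Proof.
  intros H V HV. apply open_of_nbhds; [exact HX|]. intros x Vx.
  destruct (HV (f x) Vx) as [eps [Heps Hball]].
  destruct (H x eps Heps) as [N [HN [Nx HNf]]].
  exists N. split; [exact HN|]. split; [exact Nx|]. intros y Ny. apply Hball, HNf, Ny.
Qed.

Lemma continuous_lipschitz_comp (X : TopSpace) (HX : is_topology X)
  (f : X -> R) (c : R -> R) (L : R) :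
  0 < L -> (forall a b, Rabs (c a - c b) <= L * Rabs (a - b)) ->
  continuous X Rtop f -> continuous X Rtop (fun x => c (f x)).
Proof.
  intros HL Hc Hf. apply continuous_of_nbhd; [exact HX|]. intros x eps Heps.
  destruct (continuous_nbhd X f Hf x (eps / L)) as [N [HN [Nx HNf]]].
  { apply Rdiv_lt_0_compat; auto. }
  exists N. split; [exact HN|]. split; [exact Nx|]. intros y Ny.
  specialize (HNf y Ny). specialize (Hc (f y) (f x)).
  assert (L * Rabs (f y - f x) < L * (eps / L)) by (apply Rmult_lt_compat_l; auto).
  replace (L * (eps / L)) with eps in H by (field; lra). lra.
Qed.

Lemma Rpow_coord_continuous (Y : TopSpace) (I : Type) (h : Y -> (I -> R)) (i : I) :
  continuous Y (Rpow I) h -> continuous Y Rtop (fun y => h y i).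
Proof.
  intros Hh O HO. apply (Hh (fun w => O (w i))). simpl. intros w Ow.
  destruct (HO (w i) Ow) as [d [Hd HOd]]. exists (i :: nil), d. split; [exact Hd|].
  intros w' Hw'. apply HOd, Hw'. left; reflexivity.
Qed.

Lemma continuous_subspace_nbhd (K : TopSpace) (S : K -> Prop) (F : subspace K S -> R) :
  continuous (subspace K S) Rtop F ->
  forall a eps, 0 < eps -> exists W, opens K W /\ W (proj1_sig a) /\
    forall a', W (proj1_sig a') -> Rabs (F a' - F a) < eps.
Proof.
  intros HF a eps Heps.
  destruct (HF (fun r => Rabs (r - F a) < eps) (Rtop_open_ball _ _)) as [W [HW HWF]].
  exists W. split; [exact HW|]. split.
  - apply HWF. unfold Rminus; rewrite Rplus_opp_r, Rabs_R0; exact Heps.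
  - intros a' Wa'. apply HWF, Wa'.
Qed.

Lemma continuous_subspace_of_nbhd (K : TopSpace) (HK : is_topology K)
  (S : K -> Prop) (g : K -> R) :
  (forall k, S k -> forall eps, 0 < eps -> exists W, opens K W /\ W k /\
     forall k', S k' -> W k' -> Rabs (g k' - g k) < eps) ->
  continuous (subspace K S) Rtop (fun z => g (proj1_sig z)).
Proof.
  intros H V HV. simpl.
  exists (fun k => exists W, (opens K W /\ forall k', S k' -> W k' -> V (g k')) /\ W k).
  split.
  - destruct HK as [_ [_ Hunion]]. apply Hunion. intros W [HW _]; exact HW.
  - intros [k Sk]; simpl; split.
    + intro Vk. destruct (HV (g k) Vk) as [eps [Heps Hball]].
      destruct (H k Sk eps Heps) as [W [HW [Wk HWg]]].
      exists W. split; [split; [exact HW|] | exact Wk].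
      intros k' Sk' Wk'. apply Hball, HWg; auto.
    + intros [W [[_ HWV] Wk]]. apply HWV; auto.
Qed.

Definition clamp (lo hi t : R) : R := Rmax lo (Rmin hi t).

Lemma clamp_lipschitz (lo hi a b : R) :
  lo <= hi -> Rabs (clamp lo hi a - clamp lo hi b) <= Rabs (a - b).
Proof.
  intros H. unfold clamp, Rmax, Rmin.
  repeat destruct Rle_dec; unfold Rabs; repeat destruct Rcase_abs; lra.
Qed.

Lemma clamp_bounds (lo hi t : R) : lo <= hi -> lo <= clamp lo hi t <= hi.
Proof. intros H. unfold clamp, Rmax, Rmin. repeat destruct Rle_dec; lra. Qed.

Lemma clamp_id (lo hi t : R) : lo <= t <= hi -> clamp lo hi t = t.
Proof. intros H. unfold clamp, Rmax, Rmin. repeat destruct Rle_dec; lra. Qed.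

Lemma clamp_interior (lo hi t : R) : lo < clamp lo hi t < hi -> clamp lo hi t = t.
Proof. unfold clamp, Rmax, Rmin. repeat destruct Rle_dec; lra. Qed.

Lemma separating_function (X : TopSpace) (HX : is_topology X)
  (HXcr : completely_regular X) (U : X -> Prop) (x : X) :
  opens X U -> U x ->
  exists f : X -> R, continuous X Rtop f /\ f x = 0 /\
    (forall y, ~ U y -> f y = 1) /\ (forall y, 0 <= f y <= 1).
Proof.
  intros HU Ux.
  destruct (HXcr (fun y => ~ U y) x) as [f [Hf [fx f1]]];
    [apply closed_compl_open, HU | auto |].
  exists (fun y => clamp 0 1 (f y)). split; [|split; [|split]].
  - apply (continuous_lipschitz_comp X HX f (clamp 0 1) 1); [lra| |exact Hf].
    intros a b. rewrite Rmult_1_l. apply clamp_lipschitz; lra.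
  - rewrite fx. apply clamp_id; lra.
  - intros y nUy. rewrite f1 by exact nUy. apply clamp_id; lra.
  - intro y. apply clamp_bounds; lra.
Qed.

Lemma ramp_cutoff (X : TopSpace) (HX : is_topology X) (phi : X -> R) :
  continuous X Rtop phi ->
  exists psi : X -> R, continuous X Rtop psi /\ (forall y, Rabs (psi y) <= 1) /\
    (forall y, phi y < 1 / 2 -> 1 / 2 <= psi y) /\ (forall y, 2 / 3 < phi y -> psi y = 0).
Proof.
  intros Hphi. exists (fun y => clamp 0 1 (2 - 3 * phi y)). split; [|split; [|split]].
  - apply (continuous_lipschitz_comp X HX phi (fun t => clamp 0 1 (2 - 3 * t)) 3);
      [lra | | exact Hphi].
    intros a b. eapply Rle_trans; [apply clamp_lipschitz; lra|].
    replace (2 - 3 * a - (2 - 3 * b)) with (-3 * (a - b)) by ring.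
    rewrite Rabs_mult, Rabs_left by lra. lra.
  - intro y. apply Rabs_le. pose proof (clamp_bounds 0 1 (2 - 3 * phi y)). lra.
  - intros y Hy. unfold clamp, Rmax, Rmin. repeat destruct Rle_dec; lra.
  - intros y Hy. unfold clamp, Rmax, Rmin. repeat destruct Rle_dec; lra.
Qed.

Lemma Rabs_mul_sub_lt (a a' b b' eps : R) :
  Rabs a' <= 1 -> Rabs (b' - b) < eps / 2 -> Rabs (a' - a) < eps / (2 * (Rabs b + 1)) ->
  Rabs (a' * b' - a * b) < eps.
Proof.
  intros Ha' Hb Ha. pose proof (Rabs_pos b) as Hb0. pose proof (Rabs_pos (b' - b)).
  replace (a' * b' - a * b) with (a' * (b' - b) + b * (a' - a)) by ring.
  eapply Rle_lt_trans; [apply Rabs_triang|]. rewrite !Rabs_mult.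
  assert (Rabs a' * Rabs (b' - b) <= 1 * Rabs (b' - b)) by (apply Rmult_le_compat_r; lra).
  assert (Hbound : Rabs b * Rabs (a' - a) <= (Rabs b + 1) * (eps / (2 * (Rabs b + 1)))).
  { apply Rmult_le_compat; [lra | apply Rabs_pos | lra | lra]. }
  replace ((Rabs b + 1) * (eps / (2 * (Rabs b + 1)))) with (eps / 2) in Hbound by (field; lra).
  lra.
Qed.

Lemma Rabs_factor_sub_lt (p h w c d : R) :
  1 / 2 <= p -> Rabs (p * h - w * c) < d -> Rabs (p - c) < d ->
  Rabs (h - w) < 2 * d * (1 + Rabs w).
Proof.
  intros Hp H1 H2.
  assert (Rabs (p * (h - w)) <= Rabs (p * h - w * c) + Rabs w * Rabs (c - p)).
  { replace (p * (h - w)) with ((p * h - w * c) + w * (c - p)) by ring.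
    rewrite <- Rabs_mult. apply Rabs_triang. }
  rewrite Rabs_mult, (Rabs_right p) in H by lra.
  rewrite Rabs_minus_sym in H2.
  assert (Rabs w * Rabs (c - p) <= Rabs w * d) by (apply Rmult_le_compat_l; [apply Rabs_pos|lra]).
  assert (1 / 2 * Rabs (h - w) <= p * Rabs (h - w)) by (apply Rmult_le_compat_r; [apply Rabs_pos|lra]).
  lra.
Qed.

Lemma compact_hausdorff_regular (K : TopSpace) (HK : is_topology K) (HKc : compact K)
  (HKh : hausdorff K) (V : K -> Prop) (k : K) :
  opens K V -> V k -> exists W, opens K W /\ W k /\ forall q, closure K W q -> V q.
Proof.
  intros HV Vk.
  set (F := fun O : K -> Prop => opens K O /\ ((forall y, O y -> V y) \/
        exists W, opens K W /\ W k /\ forall y, ~ (O y /\ W y))).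
  destruct (HKc F) as [L [HL Hcov]].
  - intros O [HO _]; exact HO.
  - intro q. destruct (classic (V q)) as [Vq|nVq].
    + exists V. split; [split; [exact HV | left; auto] | exact Vq].
    + assert (q <> k) by (intro; subst; auto).
      destruct (HKh q k H) as [O [W [HO [HW [Oq [Wk Hd]]]]]].
      exists O. split; [split; [exact HO | right; exists W; auto] | exact Oq].
  - destruct (nbhd_finite_inter K HK
      (fun O W => (forall y, O y -> V y) \/ forall y, ~ (O y /\ W y)) k L)
      as [W [HW [Wk HP]]].
    + intros O W W' [H|H] Hs; [left; exact H|right].
      intros y [Oy W'y]. apply (H y); auto.
    + intros O HO. destruct (HL O HO) as [_ [H|[W [HW [Wk Hd]]]]].
      * exists (fun _ => True). split; [apply HK|]. split; [exact I | left; exact H].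
      * exists W. split; [exact HW|]. split; [exact Wk | right; exact Hd].
    + exists W. split; [exact HW|]. split; [exact Wk|]. intros q Hq.
      destruct (Hcov q) as [O [HOL Oq]].
      destruct (HP O HOL) as [H|H]; [auto|].
      destruct (HL O HOL) as [HO _].
      destruct (Hq O HO Oq) as [y [Oy Wy]]. exfalso; apply (H y); auto.
Qed.

Lemma compact_adherent_point (K : TopSpace) (HKc : compact K) {J : Type}
  (S : J -> K -> Prop) (j0 : J) :
  (forall i j, exists k, forall q, S k q -> S i q /\ S j q) ->
  (forall j, exists q, S j q) ->
  exists p, forall j, closure K (S j) p.
Proof.
  intros Hdir Hne. apply NNPP; intro Hno.
  set (F := fun O => opens K O /\ exists j, forall q, S j q -> ~ O q).
  destruct (HKc F) as [L [HL Hcov]].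
  - intros O [HO _]; exact HO.
  - intro q. apply NNPP; intro Hq. apply Hno. exists q. intros j O HO Oq.
    apply NNPP; intro Hmeet. apply Hq. exists O. split; [|exact Oq]. split; [exact HO|].
    exists j. intros q' Sq' Oq'. apply Hmeet. exists q'; auto.
  - assert (Hlow : exists k, forall O, In O L -> forall q, S k q -> ~ O q).
    { clear Hcov. induction L as [|O L IH].
      - exists j0. intros O [].
      - destruct IH as [k1 Hk1]; [intros O' HO'; apply HL; right; exact HO'|].
        destruct (HL O (or_introl eq_refl)) as [_ [k2 Hk2]].
        destruct (Hdir k1 k2) as [k Hk].
        exists k. intros O' [<-|HO'] q Sq.
        + exact (Hk2 q (proj2 (Hk q Sq))).
        + exact (Hk1 O' HO' q (proj1 (Hk q Sq))). }
    destruct Hlow as [k Hk]. destruct (Hne k) as [q Sq].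
    destruct (Hcov q) as [O [HO Oq]]. exact (Hk O HO q Sq Oq).
Qed.

Definition ext0 (X : TopSpace) (A : X -> Prop) (g : subspace X A -> R) (y : X) : R :=
  match excluded_middle_informative (A y) with
  | left H => g (exist _ y H)
  | right _ => 0
  end.

Lemma ext0_in (X : TopSpace) (A : X -> Prop) (g : subspace X A -> R) (y : X) (H : A y) :
  ext0 X A g y = g (exist _ y H).
Proof.
  unfold ext0. destruct excluded_middle_informative as [H'|H']; [|contradiction].
  rewrite (proof_irrelevance _ H H'). reflexivity.
Qed.

Lemma cutoff_mul_continuous (X : TopSpace) (HX : is_topology X) (A : X -> Prop)
  (psi : X -> R) (g : subspace X A -> R) :
  continuous X Rtop psi -> (forall y, Rabs (psi y) <= 1) ->
  continuous (subspace X A) Rtop g ->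
  (forall y, exists N, opens X N /\ N y /\
     ((forall y', N y' -> psi y' = 0) \/ (forall y', N y' -> A y'))) ->
  continuous X Rtop (fun y => psi y * ext0 X A g y).
Proof.
  intros Hpsi Hpsib Hg Hloc. apply continuous_of_nbhd; [exact HX|]. intros y eps Heps.
  destruct (Hloc y) as [N [HN [Ny [Hzero|HA]]]].
  - exists N. split; [exact HN|]. split; [exact Ny|]. intros y' Ny'.
    rewrite !Hzero by auto. rewrite !Rmult_0_l. unfold Rminus.
    rewrite Rplus_opp_r, Rabs_R0. exact Heps.
  - pose proof (HA y Ny) as Ay.
    destruct (continuous_subspace_nbhd _ _ _ Hg (exist _ y Ay) (eps / 2)) as [W [HW [Wy HWg]]];
      [lra|].
    assert (Hd : 0 < eps / (2 * (Rabs (g (exist _ y Ay)) + 1))).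
    { apply Rdiv_lt_0_compat; [lra|]. pose proof (Rabs_pos (g (exist _ y Ay))). lra. }
    destruct (continuous_nbhd X psi Hpsi y _ Hd) as [M [HM [My HMpsi]]].
    exists (fun y' => N y' /\ W y' /\ M y').
    split; [apply opens_and; [exact HX | exact HN | apply opens_and; auto]|].
    split; [auto|]. intros y' [Ny' [Wy' My']].
    rewrite (ext0_in X A g y' (HA y' Ny')), (ext0_in X A g y Ay).
    apply Rabs_mul_sub_lt; [apply Hpsib | apply (HWg (exist _ y' (HA y' Ny')) Wy') | auto].
Qed.

Section StoneCech.

Variables (X K : TopSpace) (e : X -> K).
Hypotheses (HXt : is_topology X) (HXh : hausdorff X) (HXcr : completely_regular X).
Hypotheses (HKt : is_topology K) (HKc : compact K) (HKh : hausdorff K).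
Hypotheses (e_inj : forall a b, e a = e b -> a = b) (e_cont : continuous X K e)
  (e_open : forall U, opens X U -> exists V, opens K V /\ forall x, U x <-> V (e x)).
Hypothesis e_dense : forall k, closure K (fun k' => exists x, e x = k') k.
Hypothesis e_extend : forall f : X -> R, continuous X Rtop f ->
  (exists M, forall x, Rabs (f x) <= M) ->
  exists g : K -> R, continuous K Rtop g /\ forall x, g (e x) = f x.

Definition tends (F : X -> R) (r : R) (p : K) : Prop :=
  forall eps, 0 < eps -> exists W, opens K W /\ W p /\
    forall x, W (e x) -> Rabs (F x - r) < eps.

Lemma in_upsilon_tends (p : K) (F : X -> R) :
  in_upsilon X K e p -> continuous X Rtop F -> exists r, tends F r p.
Proof.
  intros Hup HF. destruct (Hup F HF) as [g [Hge Hg]].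
  exists (g p). intros eps Heps.
  destruct (continuous_subspace_nbhd _ _ _ Hg (exist _ p (or_intror eq_refl)) eps Heps)
    as [W [HW [Wp HWg]]].
  exists W. split; [exact HW|]. split; [exact Wp|]. intros x Wx.
  specialize (HWg (exist _ (e x) (or_introl (ex_intro _ x eq_refl))) Wx).
  simpl in HWg. rewrite Hge in HWg. exact HWg.
Qed.

Lemma tends_lower_bound (G : X -> R) (a c : R) (p : K) (W : K -> Prop) :
  tends G c p -> opens K W -> W p -> (forall y, W (e y) -> a <= G y) -> a <= c.
Proof.
  intros HG HW Wp HWG. apply Rnot_lt_le; intro Hlt.
  destruct (HG (a - c)) as [W1 [HW1 [W1p H1]]]; [lra|].
  destruct (e_dense p (fun k => W k /\ W1 k)) as [k [[Wk W1k] [y <-]]];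
    [apply opens_and; auto | auto |].
  specialize (H1 y W1k). specialize (HWG y Wk). apply Rabs_def2 in H1. lra.
Qed.

Lemma tends_factor (F G H : X -> R) (z c : R) (p : K) (W : K -> Prop) :
  tends F z p -> tends G c p -> c <> 0 -> opens K W -> W p ->
  (forall y, W (e y) -> 1 / 2 <= G y /\ F y = G y * H y) ->
  tends H (z / c) p.
Proof.
  intros HF HG Hc0 HW Wp HWG eps Heps.
  set (w := z / c). pose proof (Rabs_pos w).
  set (d := eps / (2 * (1 + Rabs w))).
  assert (Hd : 0 < d) by (unfold d; apply Rdiv_lt_0_compat; lra).
  destruct (HF d Hd) as [W1 [HW1 [W1p H1]]].
  destruct (HG d Hd) as [W2 [HW2 [W2p H2]]].
  exists (fun k => W k /\ W1 k /\ W2 k).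
  split; [repeat apply opens_and; auto|]. split; [auto|].
  intros y [Wy [W1y W2y]]. destruct (HWG y Wy) as [Gy HFy].
  specialize (H1 y W1y). rewrite HFy in H1.
  replace z with (w * c) in H1 by (unfold w; field; exact Hc0).
  replace eps with (2 * d * (1 + Rabs w)) by (unfold d; field; lra).
  apply (Rabs_factor_sub_lt (G y) (H y) w c d); auto.
Qed.

Lemma tends_finite {I : Type} (F : X -> I -> R) (z : I -> R) (p : K) :
  (forall i, tends (fun y => F y i) (z i) p) ->
  forall l eps, 0 < eps -> exists W, opens K W /\ W p /\
    forall y, W (e y) -> forall i, In i l -> Rabs (F y i - z i) < eps.
Proof.
  intros Hz l eps Heps.
  destruct (nbhd_finite_inter K HKt
              (fun i W => forall y, W (e y) -> Rabs (F y i - z i) < eps) p l)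
    as [W [HW [Wp HWz]]].
  - intros i W W' HWi Hs y Wy. apply HWi, Hs, Wy.
  - intros i _. destruct (Hz i eps Heps) as [W [HW [Wp HWz]]]. exists W; auto.
  - exists W. split; [exact HW|]. split; [exact Wp|]. intros y Wy i Hi. apply (HWz i Hi), Wy.
Qed.

Lemma closed_embedding_limit (A : X -> Prop) (I : Type) (h : subspace X A -> (I -> R))
  (p : K) (z : I -> R) (W0 : K -> Prop) :
  embedding (subspace X A) (Rpow I) h ->
  closed_set (Rpow I) (fun w => exists a, h a = w) ->
  opens K W0 -> W0 p -> (forall y, W0 (e y) -> A y) ->
  (forall i, tends (ext0 X A (fun a => h a i)) (z i) p) ->
  exists y, e y = p.
Proof.
  intros [_ [_ h_open]] h_closed HW0 W0p W0A Hz.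
  set (hh := fun y i => ext0 X A (fun a => h a i) y).
  assert (Hhh : forall y (Ay : A y), hh y = h (exist _ y Ay)).
  { intros y Ay. apply functional_extensionality; intro i. exact (ext0_in X A (fun a => h a i) y Ay). }
  assert (Hnear : forall l eps, 0 < eps -> exists W, opens K W /\ W p /\
            forall y, W (e y) -> A y /\ forall i, In i l -> Rabs (hh y i - z i) < eps).
  { intros l eps Heps. destruct (tends_finite hh z p Hz l eps Heps) as [W [HW [Wp HWz]]].
    exists (fun k => W k /\ W0 k). split; [apply opens_and; auto|]. split; [auto|].
    intros y [Wy W0y]. split; [auto | apply HWz, Wy]. }
  apply NNPP; intro HpX.
  unfold closed_set in h_closed. simpl in h_closed.
  destruct (classic (exists a, h a = z)) as [[a Ha]|Hno].
  - assert (Hne : e (proj1_sig a) <> p) by (intro E; apply HpX; eauto).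
    destruct (HKh _ _ Hne) as [O [Q [HO [HQ [Oa [Qp HOQ]]]]]].
    destruct (h_open (fun a' => O (e (proj1_sig a')))) as [Vz [HVz HVzE]].
    { exists (fun y => O (e y)). split; [apply e_cont, HO | intro; reflexivity]. }
    assert (Vza : Vz z) by (rewrite <- Ha; apply HVzE, Oa).
    simpl in HVz. destruct (HVz z Vza) as [l [eps [Heps Hball]]].
    destruct (Hnear l eps Heps) as [W [HW [Wp HWz]]].
    destruct (e_dense p (fun k => W k /\ Q k)) as [k [[Wk Qk] [y <-]]];
      [apply opens_and; auto | auto |].
    destruct (HWz y Wk) as [Ay Hyz].
    apply (HOQ (e y)). split; [|exact Qk].
    apply (proj2 (HVzE (exist _ y Ay))), Hball. intros i Hi. rewrite <- (Hhh y Ay). auto.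
  - destruct (h_closed z Hno) as [l [eps [Heps Hball]]].
    destruct (Hnear l eps Heps) as [W [HW [Wp HWz]]].
    destruct (e_dense p W HW Wp) as [k [Wk [y <-]]].
    destruct (HWz y Wk) as [Ay Hyz].
    apply (Hball (hh y) Hyz). exists (exist _ y Ay). symmetry; apply Hhh.
Qed.

Lemma realcompact_nbhd_not_adherent (x : X) (U : X -> Prop) :
  opens X U -> U x -> realcompact (subspace X (closure X U)) ->
  ~ closure K (fun k => in_upsilon X K e k /\ ~ (exists y, e y = k)) (e x).
Proof.
  intros HU Ux [I [h [h_emb h_closed]]] Hcl.
  set (A := closure X U) in *.
  destruct (separating_function X HXt HXcr U x HU Ux) as [phi [Hphi [phix [phi1 phib]]]].
  destruct (e_extend phi Hphi) as [phih [Hphih Hphie]].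
  { exists 1. intro y. specialize (phib y). rewrite Rabs_right; lra. }
  destruct (Hcl (fun k => phih k < 1 / 3)) as [p [Hp3 [Hup HpX]]].
  { apply open_lt_preimage, Hphih. }
  { rewrite Hphie, phix; lra. }
  destruct (ramp_cutoff X HXt phi Hphi) as [psi [Hpsi [psib [psi_half psi_zero]]]].
  assert (phi_A : forall y, phi y < 1 -> A y).
  { intros y Hy O HO Oy. exists y. split; [exact Oy|].
    apply NNPP; intro nUy. rewrite phi1 in Hy by exact nUy. lra. }
  set (f := fun i y => psi y * ext0 X A (fun a => h a i) y).
  assert (Hf : forall i, continuous X Rtop (f i)).
  { intro i. apply cutoff_mul_continuous; auto.
    - apply Rpow_coord_continuous, (proj1 (proj2 h_emb)).
    - intro y. destruct (Rlt_dec (2 / 3) (phi y)).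
      + exists (fun y' => 2 / 3 < phi y'). split; [apply open_gt_preimage, Hphi|].
        split; [auto | left; auto].
      + exists (fun y' => phi y' < 1). split; [apply open_lt_preimage, Hphi|].
        split; [lra | right; auto]. }
  destruct (in_upsilon_tends p psi Hup Hpsi) as [c Hc].
  destruct (choice (fun i r => tends (f i) r p)) as [z Hz].
  { intro i. apply in_upsilon_tends; auto. }
  set (W0 := fun k => phih k < 1 / 2).
  assert (HW0 : opens K W0) by apply open_lt_preimage, Hphih.
  assert (W0p : W0 p) by (unfold W0; lra).
  assert (W0e : forall y, W0 (e y) -> phi y < 1 / 2).
  { intros y. unfold W0. rewrite Hphie. auto. }
  assert (Hc2 : 1 / 2 <= c).
  { apply (tends_lower_bound psi (1 / 2) c p W0); auto. }
  destruct (closed_embedding_limit A I h p (fun i => z i / c) W0) as [y Hy]; auto.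
  - intros y Hy. apply phi_A. apply W0e in Hy. lra.
  - intro i. apply (tends_factor (f i) psi _ (z i) c p W0); auto; lra.
  - apply HpX. exists y. exact Hy.
Qed.

Lemma tends_of_adherent (F : X -> R) (r : R) (p : K) :
  continuous X Rtop F ->
  (forall eps, 0 < eps ->
     closure K (fun k => exists y, e y = k /\ Rabs (F y - r) < eps) p) ->
  tends F r p.
Proof.
  intros HF Hadh.
  pose proof (Rle_abs r). pose proof (Rle_abs (- r)). rewrite Rabs_Ropp in *.
  (* [F] may be unbounded, so extend its truncation [F0] at [+-M] instead; [F0]
     agrees with [F] wherever it is within [1] of [r]. *)
  set (M := Rabs r + 2).
  set (F0 := fun y => clamp (- M) M (F y)).
  assert (HF0 : continuous X Rtop F0).
  { apply (continuous_lipschitz_comp X HXt F (clamp (- M) M) 1); [lra| |exact HF].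
    intros a b. rewrite Rmult_1_l. apply clamp_lipschitz. unfold M; lra. }
  destruct (e_extend F0 HF0) as [g [Hg Hge]].
  { exists M. intro y. apply Rabs_le, clamp_bounds. unfold M; lra. }
  assert (Hr : clamp (- M) M r = r) by (apply clamp_id; unfold M; lra).
  assert (Hgp : g p = r).
  { apply NNPP; intro Hne. set (d := Rabs (g p - r)).
    assert (Hd : 0 < d) by (apply Rabs_pos_lt; intro; apply Hne; lra).
    destruct (continuous_nbhd K g Hg p (d / 2)) as [N [HN [Np HNg]]]; [lra|].
    destruct (Hadh (d / 2) ltac:(lra) N HN Np) as [k [Nk [y [<- Hy]]]].
    specialize (HNg _ Nk). rewrite Hge, Rabs_minus_sym in HNg.
    pose proof (clamp_lipschitz (- M) M (F y) r ltac:(unfold M; lra)) as HF0y.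
    rewrite Hr in HF0y. fold (F0 y) in HF0y.
    assert (d <= Rabs (g p - F0 y) + Rabs (F0 y - r)).
    { unfold d. replace (g p - r) with ((g p - F0 y) + (F0 y - r)) by ring. apply Rabs_triang. }
    lra. }
  intros eps Heps.
  destruct (continuous_nbhd K g Hg p (Rmin eps 1)) as [N [HN [Np HNg]]];
    [apply Rmin_glb_lt; lra|].
  exists N. split; [exact HN|]. split; [exact Np|]. intros y Ny.
  specialize (HNg _ Ny). rewrite Hge, Hgp in HNg.
  pose proof (Rmin_l eps 1). pose proof (Rmin_r eps 1).
  assert (HF0y : F0 y = F y).
  { apply clamp_interior. fold (F0 y). apply Rabs_def2 in HNg. unfold M; lra. }
  rewrite <- HF0y. lra.
Qed.

Lemma in_upsilon_of_tends (p : K) :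
  ~ (exists x, e x = p) ->
  (forall F, continuous X Rtop F -> exists r, tends F r p) ->
  in_upsilon X K e p.
Proof.
  intros HpX Htends F HF.
  destruct (Htends F HF) as [r Hr].
  set (g := fun k => match excluded_middle_informative (exists x, e x = k) with
                     | left H => F (proj1_sig (constructive_indefinite_description _ H))
                     | right _ => r
                     end).
  assert (Hge : forall y, g (e y) = F y).
  { intro y. unfold g. destruct excluded_middle_informative as [H|H]; [|exfalso; eauto].
    destruct constructive_indefinite_description as [y' Hy']. simpl.
    rewrite (e_inj _ _ Hy'). reflexivity. }
  assert (Hgp : g p = r).
  { unfold g. destruct excluded_middle_informative; [contradiction | reflexivity]. }
  exists g. split; [exact Hge|].
  apply continuous_subspace_of_nbhd; [exact HKt|]. intros k Sk eps Heps.
  destruct Sk as [[x <-]| ->].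
  - destruct (continuous_nbhd X F HF x eps Heps) as [N [HN [Nx HNF]]].
    destruct (e_open N HN) as [N' [HN' HNN']].
    assert (Hne : e x <> p) by (intro; apply HpX; eauto).
    destruct (HKh _ _ Hne) as [O [Q [HO [HQ [Ox [Qp HOQ]]]]]].
    exists (fun k => N' k /\ O k). split; [apply opens_and; auto|].
    split; [split; [apply HNN', Nx | exact Ox]|].
    intros k' Sk' [N'k Ok]. destruct Sk' as [[y <-]| ->].
    + rewrite !Hge. apply HNF, HNN', N'k.
    + exfalso. apply (HOQ p); auto.
  - destruct (Hr eps Heps) as [W [HW [Wp HWF]]].
    exists W. split; [exact HW|]. split; [exact Wp|].
    intros k' Sk' Wk'. rewrite Hgp. destruct Sk' as [[y <-]| ->].
    + rewrite Hge. auto.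
    + rewrite Hgp. unfold Rminus. rewrite Rplus_opp_r, Rabs_R0. exact Heps.
Qed.

Definition cfun : Type := {f : X -> R | continuous X Rtop f}.

Definition eval_map (A : X -> Prop) (a : subspace X A) (f : cfun) : R :=
  proj1_sig f (proj1_sig a).

Lemma eval_map_injective (A : X -> Prop) (a b : subspace X A) :
  eval_map A a = eval_map A b -> a = b.
Proof.
  destruct a as [a Ha], b as [b Hb]. intros Hab.
  assert (a = b).
  { apply NNPP; intro Hne. destruct (HXh a b Hne) as [O [Q [HO [HQ [Oa [Qb HOQ]]]]]].
    destruct (separating_function X HXt HXcr O a HO Oa) as [f [Hf [fa [f1 _]]]].
    pose proof (f_equal (fun w => w (exist _ f Hf)) Hab) as E.
    unfold eval_map in E; simpl in E.
    rewrite fa, f1 in E; [lra|]. intro Ob. apply (HOQ b); auto. }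
  subst. f_equal. apply proof_irrelevance.
Qed.

Lemma eval_map_continuous (A : X -> Prop) :
  continuous (subspace X A) (Rpow cfun) (eval_map A).
Proof.
  intros O HO. exists (fun y => O (fun f : cfun => proj1_sig f y)).
  split; [|intro; reflexivity].
  apply open_of_nbhds; [exact HXt|]. intros y Oy.
  destruct (HO _ Oy) as [l [eps [Heps Hball]]].
  destruct (nbhd_finite_inter X HXt
      (fun (f : cfun) N => forall y', N y' -> Rabs (proj1_sig f y' - proj1_sig f y) < eps) y l)
    as [N [HN [Ny HNf]]].
  - intros f N N' Hf Hs y' Ny'. apply Hf, Hs, Ny'.
  - intros f _. destruct (continuous_nbhd X _ (proj2_sig f) y eps Heps) as [N [HN [Ny HNf]]].
    exists N; auto.
  - exists N. split; [exact HN|]. split; [exact Ny|].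
    intros y' Ny'. apply Hball. intros f Hf. apply (HNf f Hf), Ny'.
Qed.

Lemma eval_map_open (A : X -> Prop) (U : subspace X A -> Prop) :
  opens (subspace X A) U ->
  exists V, opens (Rpow cfun) V /\ forall a, U a <-> V (eval_map A a).
Proof.
  intros [U0 [HU0 HU]].
  exists (fun w : cfun -> R =>
            exists f : cfun, (forall y, ~ U0 y -> proj1_sig f y = 1) /\ Rabs (w f) < 1 / 2).
  split.
  - simpl. intros w [f [Hf1 Hf2]]. exists (f :: nil), (1 / 2 - Rabs (w f)). split; [lra|].
    intros w' Hw'. exists f. split; [exact Hf1|]. specialize (Hw' f (or_introl eq_refl)).
    pose proof (Rabs_triang (w' f - w f) (w f)) as Htri.
    replace (w' f - w f + w f) with (w' f) in Htri by ring. lra.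
  - intros a. split.
    + intro Ua. apply HU in Ua.
      destruct (separating_function X HXt HXcr U0 (proj1_sig a) HU0 Ua) as [f [Hf [fa [f1 _]]]].
      exists (exist _ f Hf). split; [exact f1|].
      unfold eval_map. simpl. rewrite fa, Rabs_R0. lra.
    + intros [f [Hf1 Hf2]]. apply HU. apply NNPP; intro nU. unfold eval_map in Hf2.
      rewrite Hf1, Rabs_R1 in Hf2 by exact nU. lra.
Qed.

Lemma eval_map_embedding (A : X -> Prop) :
  embedding (subspace X A) (Rpow cfun) (eval_map A).
Proof.
  split; [exact (eval_map_injective A)|].
  split; [apply eval_map_continuous | apply eval_map_open].
Qed.

Lemma eval_adherent_point (A : X -> Prop) (w : cfun -> R) :
  (forall (l : list cfun) (eps : posreal), exists a : subspace X A,
     forall f, In f l -> Rabs (eval_map A a f - w f) < eps) ->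
  exists p, (forall O, opens K O -> O p -> exists y, A y /\ O (e y)) /\
    forall f : cfun, tends (proj1_sig f) (w f) p.
Proof.
  intros Happrox.
  set (S := fun (j : list cfun * posreal) k =>
         exists y, A y /\ e y = k /\ forall f, In f (fst j) -> Rabs (proj1_sig f y - w f) < snd j).
  assert (HS : forall j, exists k, S j k).
  { intros [l eps]. destruct (Happrox l eps) as [a Ha].
    exists (e (proj1_sig a)), (proj1_sig a). split; [exact (proj2_sig a)|].
    split; [reflexivity | exact Ha]. }
  assert (Hdir : forall i j, exists k, forall q, S k q -> S i q /\ S j q).
  { intros [l1 e1] [l2 e2].
    exists (l1 ++ l2, mkposreal (Rmin e1 e2) (Rmin_pos _ _ (cond_pos e1) (cond_pos e2))).
    intros q [y [Ay [<- Hy]]]. simpl in Hy.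
    split; exists y; (split; [exact Ay|]); (split; [reflexivity|]); intros f Hf; simpl;
      (eapply Rlt_le_trans; [apply Hy; apply in_or_app; auto | first [apply Rmin_l | apply Rmin_r]]). }
  destruct (compact_adherent_point K HKc S (nil, mkposreal 1 Rlt_0_1) Hdir HS) as [p Hp].
  exists p. split.
  - intros O HO Op. destruct (Hp (nil, mkposreal 1 Rlt_0_1) O HO Op) as [k [Ok [y [Ay [<- _]]]]].
    exists y; auto.
  - intro f. apply tends_of_adherent; [exact (proj2_sig f)|]. intros eps Heps O HO Op.
    destruct (Hp (f :: nil, mkposreal eps Heps) O HO Op) as [k [Ok [y [_ [<- Hy]]]]].
    exists (e y). split; [exact Ok|]. exists y. split; [reflexivity|]. apply Hy. left; reflexivity.
Qed.

Lemma eval_image_closed (V W : K -> Prop) :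
  opens K W -> (forall q, closure K W q -> V q) ->
  (forall k, V k -> ~ (in_upsilon X K e k /\ ~ (exists y, e y = k))) ->
  closed_set (Rpow cfun) (fun w => exists a, eval_map (closure X (fun y => W (e y))) a = w).
Proof.
  intros HW HWV HVups.
  set (A := closure X (fun y => W (e y))).
  unfold closed_set. simpl. intros w Hw. apply NNPP; intro Hw_adh.
  destruct (eval_adherent_point A w) as [p [HpA Htends]].
  { intros l eps. apply NNPP; intro Hno. apply Hw_adh. exists l, eps.
    split; [apply cond_pos|]. intros w' Hw' [a <-]. apply Hno. exists a. exact Hw'. }
  assert (HpX : ~ exists x, e x = p).
  { intros [x0 <-]. apply Hw.
    assert (Ax0 : A x0).
    { intros O HO Ox0. destruct (e_open O HO) as [O' [HO' HOO']].
      destruct (HpA O' HO') as [y [Ay Oy]]; [apply HOO', Ox0|].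
      apply HOO' in Oy. exact (Ay O HO Oy). }
    exists (exist _ x0 Ax0). apply functional_extensionality. intro f.
    apply NNPP; intro Hne.
    destruct (Htends f (Rabs (proj1_sig f x0 - w f))) as [N [HN [Nx HNf]]].
    { apply Rabs_pos_lt. intro. apply Hne. unfold eval_map; simpl. lra. }
    specialize (HNf x0 Nx). lra. }
  apply (HVups p).
  - apply HWV. intros O HO Op. destruct (HpA O HO Op) as [y [Ay Oy]].
    destruct (Ay (fun y' => O (e y')) (e_cont O HO) Oy) as [y' [Oy' Wy']].
    exists (e y'). split; assumption.
  - split; [|exact HpX]. apply in_upsilon_of_tends; [exact HpX|].
    intros F HF. exists (w (exist _ F HF)). exact (Htends (exist _ F HF)).
Qed.

Lemma not_adherent_realcompact_nbhd (x : X) :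
  ~ closure K (fun k => in_upsilon X K e k /\ ~ (exists y, e y = k)) (e x) ->
  exists U, opens X U /\ U x /\ realcompact (subspace X (closure X U)).
Proof.
  intros Hx.
  assert (HV : exists V, opens K V /\ V (e x) /\
            forall k, V k -> ~ (in_upsilon X K e k /\ ~ exists y, e y = k)).
  { apply NNPP; intro Hno. apply Hx. intros V HV Vx. apply NNPP; intro Hmeet.
    apply Hno. exists V. split; [exact HV|]. split; [exact Vx|].
    intros k Vk Sk. apply Hmeet. exists k; auto. }
  destruct HV as [V [HV [Vx HVups]]].
  destruct (compact_hausdorff_regular K HKt HKc HKh V (e x) HV Vx) as [W [HW [Wx HWV]]].
  exists (fun y => W (e y)). split; [apply e_cont, HW|]. split; [exact Wx|].
  exists cfun, (eval_map (closure X (fun y => W (e y)))).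
  split; [apply eval_map_embedding | apply (eval_image_closed V W); auto].
Qed.

End StoneCech.

Theorem lemma3p5 (X : TopSpace) (HX : tychonoff X)
  (K : TopSpace) (e : X -> K) (HK : stone_cech X K e) :
  locally_realcompact X <->
  (forall x : X,
     ~ closure K (fun k => in_upsilon X K e k /\ ~ (exists y, e y = k)) (e x)).
Proof.
  destruct HX as [HXt [HXh HXcr]].
  destruct HK as [HKt [HKc [HKh [[e_inj [e_cont e_open]] [e_dense e_extend]]]]].
  split.
  - intros Hlrc x. destruct (Hlrc x) as [U [HU [Ux HUrc]]].
    eapply realcompact_nbhd_not_adherent; eauto.
  - intros Hn x. eapply not_adherent_realcompact_nbhd; eauto.
Qed.
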